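(* Let $d$, $a$, $b$ be positive real numbers. Each of the following sets $S$ satisfies $|S+S|\le |S-S|$ (i.e. is not sum-dominant): $S_1=(0\mid d,d,2d,a,b)$ where additionally $a+b=d$; $S_2=(0\mid d,d,2d,d,a)$; $S_3=(0\mid d,d,2d,a,d)$; $S_4=(0\mid 2d,d,d,a,2d)$; $S_5=(0\mid a,b,b,a,a)$; $S_6=(0\mid a+b,a,a,b,a+b)$; $S_7=(0\mid a+b,a,a,b,a)$; $S_8=(0\mid a,2a,a,a,b)$; $S_9=(0\mid a+b,a,a+b,a,b)$; $S_{10}=(0\mid a+b,2a+b,a+b,a,b)$; $S_{11}=(0\mid a,b,a,a+b,a)$; $S_{12}=(0\mid a,b,a+b,a,a)$; $S_{13}=(0\mid 2a+b,a,a,b,a)$; $S_{14}=(0\mid a+b,a,a,b,2a)$; $S_{15}=(0\mid a,a+b,a,b,a)$.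
   Context: Notation: for a real number $m$ and positive reals $c_1,\dots,c_5$, $(m\mid c_1,c_2,c_3,c_4,c_5)$ denotes the set $\{m,\ m+c_1,\ m+c_1+c_2,\ m+c_1+c_2+c_3,\ m+c_1+\cdots+c_4,\ m+c_1+\cdots+c_5\}$, i.e. the set whose consecutive elements in increasing order differ by $c_1,\dots,c_5$. For a finite set $S$ of reals, $S+S=\{x+y: x,y\in S\}$, $S-S=\{x-y: x,y\in S\}$, and $S$ is sum-dominant if $|S+S|>|S-S|$. *)

From HB Require Import structures.
From mathcomp Require Import all_boot all_order all_algebra.
From mathcomp Require Import reals.
Set Implicit Arguments. Unset Strict Implicit. Unset Printing Implicit Defensive.
Import Order.TTheory GRing.Theory Num.Theory.
Local Open Scope ring_scope.

(* (m | c1,c2,c3,c4,c5): the set with minimum m and consecutive gaps c1..c5,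
   listed as a sequence of its elements. *)
Definition gapset (R : realType) (m c1 c2 c3 c4 c5 : R) : seq R :=
  [:: m; m + c1; m + c1 + c2; m + c1 + c2 + c3; m + c1 + c2 + c3 + c4;
      m + c1 + c2 + c3 + c4 + c5].

(* S + S and S - S, as duplicate-free sequences (so size = cardinality). *)
Definition sumset (R : realType) (S : seq R) : seq R :=
  undup [seq x + y | x <- S, y <- S].
Definition diffset (R : realType) (S : seq R) : seq R :=
  undup [seq x - y | x <- S, y <- S].

Definition not_sum_dominant (R : realType) (S : seq R) : Prop :=
  (size (sumset S) <= size (diffset S))%N.

From HB Require Import structures.
From mathcomp Require Import all_boot all_order all_algebra.
From mathcomp Require Import reals.
From mathcomp Require Import ring.
Import Order.TTheory GRing.Theory Num.Theory.
Local Open Scope ring_scope.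

(** Each of the sets is the image of a six-point configuration [P] of the
    lattice [Z^2] under [p |-> p.1 u + p.2 v] for positive reals [u, v].  Two
    points of [P + P] or [P - P] have the same image iff their difference lies
    in the kernel of this map.  Either no nonzero such difference does, and
    then the images have exactly as many sums and differences as [P] itself,
    or some [delta] does; then [delta.1 * delta.2 < 0], the ratio [u : v] is
    determined by [delta], and the map identifies exactly the points with
    equal cross product against [delta].  So [|S + S| <= |S - S|] follows from
    a finite computation on [P]: once for the generic case and once for each
    candidate [delta]. *)

Lemma allpairs_map_morph {T U : Type} {f : T -> U} {opT : T -> T -> T}
    {opU : U -> U -> U} :
  {morph f : x y / opT x y >-> opU x y} -> forall s t : seq T,
  [seq opU x y | x <- map f s, y <- map f t] = map f [seq opT x y | x <- s, y <- t].
Proof.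
move=> fM s t; rewrite allpairs_mapl allpairs_mapr map_allpairs.
by apply: eq_allpairs => x y; rewrite fM.
Qed.

Lemma size_undup_map_eqker {T U V : eqType} {f : T -> U} {g : T -> V} {s : seq T} :
  {in s &, forall x y, (f x == f y) = (g x == g y)} ->
  size (undup (map f s)) = size (undup (map g s)).
Proof.
elim: s => //= x s IHs fg.
have fg_s : {in s &, forall y z, (f y == f z) = (g y == g z)}.
  by move=> y z ys zs; apply: fg; rewrite inE ?ys ?zs orbT.
have -> : (f x \in map f s) = (g x \in map g s).
  apply/mapP/mapP => -[y ys xy]; exists y => //; apply/eqP.
    by rewrite -(fg x y) ?mem_head ?inE ?ys ?orbT ?xy.
  by rewrite (fg x y) ?mem_head ?inE ?ys ?orbT ?xy.
by case: ifP => _ /=; rewrite IHs.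
Qed.

Definition sums {V : zmodType} (s : seq V) : seq V := [seq x + y | x <- s, y <- s].
Definition diffs {V : zmodType} (s : seq V) : seq V := [seq x - y | x <- s, y <- s].

Lemma sumset_map {V : zmodType} {R : realType} (f : V -> R) (s : seq V) :
  {morph f : x y / x + y} -> sumset (map f s) = undup (map f (sums s)).
Proof. by move=> fD; rewrite /sumset (allpairs_map_morph fD). Qed.

Lemma diffset_map {V : zmodType} {R : realType} (f : V -> R) (s : seq V) :
  {morph f : x y / x - y} -> diffset (map f s) = undup (map f (diffs s)).
Proof. by move=> fB; rewrite /diffset (allpairs_map_morph fB). Qed.

Definition gap_points {V : zmodType} (g1 g2 g3 g4 g5 : V) : seq V :=
  [:: 0; g1; g1 + g2; g1 + g2 + g3; g1 + g2 + g3 + g4; g1 + g2 + g3 + g4 + g5].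

Definition cross (delta p : int * int) : int := delta.1 * p.2 - delta.2 * p.1.

Definition projections_not_sum_dominant (P : seq (int * int)) : bool :=
  let S := sums P in let D := diffs P in
  (size (undup S) <= size (undup D))%N &&
  all (fun delta => (0 <= delta.1 * delta.2) ||
         (size (undup (map (cross delta) S)) <= size (undup (map (cross delta) D)))%N)
      (diffs (undup (S ++ D))).

Section LatticeImage.

Context {R : realType} (u v : R).
Hypotheses (u_gt0 : 0 < u) (v_gt0 : 0 < v).

Definition lincomb (p : int * int) : R := p.1%:~R * u + p.2%:~R * v.

Lemma lincombD : {morph lincomb : p q / p + q}.
Proof. by move=> p q; rewrite /lincomb /= !intrD; ring. Qed.

Lemma lincombB : {morph lincomb : p q / p - q}.
Proof. by move=> p q; rewrite /lincomb /= !intrB; ring. Qed.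

Lemma lincomb_kernel_sign (delta : int * int) :
  delta != 0 -> lincomb delta = 0 -> delta.1 * delta.2 < 0.
Proof.
case: delta => [m n] /= delta_neq0 ker.
have m_neq0 : m != 0.
  apply: contra delta_neq0 => /eqP m0; move: ker; rewrite /lincomb m0 /= mul0r add0r.
  by move/eqP; rewrite mulf_eq0 (gt_eqF v_gt0) orbF intr_eq0 => /eqP ->.
have mnv : (m * n)%:~R * v = m%:~R * lincomb (m, n) - m%:~R ^+ 2 * u :> R.
  by rewrite /lincomb /= intrM; ring.
have : (m * n)%:~R * v < 0 :> R.
  by rewrite mnv ker mulr0 sub0r oppr_lt0 mulr_gt0 // exprn_even_gt0 // intr_eq0.
by rewrite pmulr_llt0 // ltrz0.
Qed.

Lemma lincomb_eq_cross (delta p q : int * int) :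
  lincomb delta = 0 -> delta.1 != 0 ->
  (lincomb p == lincomb q) = (cross delta p == cross delta q).
Proof.
move=> ker delta1_neq0.
have scale r : delta.1%:~R * lincomb r = r.1%:~R * lincomb delta + v * (cross delta r)%:~R.
  by rewrite /lincomb /cross intrB !intrM; ring.
have delta1_neq0R : delta.1%:~R != 0 :> R by rewrite intr_eq0.
rewrite -(inj_eq (mulfI delta1_neq0R)) !scale ker !mulr0 !add0r.
by rewrite (inj_eq (mulfI (lt0r_neq0 v_gt0))) eqr_int.
Qed.

Lemma lincomb_injective_or_kernel (s : seq (int * int)) :
  {in s &, injective lincomb} \/
  exists2 delta, delta \in diffs s & delta != 0 /\ lincomb delta = 0.
Proof.
have [/hasP[delta ds /andP[delta_neq0 /eqP ker]] | no_ker] :=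
  boolP (has (fun delta => (delta != 0) && (lincomb delta == 0)) (diffs s)).
  by right; exists delta.
left=> x y xs ys xy; apply/eqP; rewrite -subr_eq0; apply: contraNT no_ker => xy_neq0.
apply/hasP; exists (x - y); first exact: allpairs_f.
by rewrite xy_neq0 lincombB xy subrr eqxx.
Qed.

Lemma not_sum_dominant_lincomb (P : seq (int * int)) :
  projections_not_sum_dominant P -> not_sum_dominant (map lincomb P).
Proof.
case/andP=> generic /allP degenerate.
rewrite /not_sum_dominant (sumset_map _ _ lincombD) (diffset_map _ _ lincombB).
set S := sums P; set D := diffs P.
have [inj | [delta delta_in [delta_neq0 ker]]] :=
  lincomb_injective_or_kernel (undup (S ++ D)).
  have inj_id (s : seq (int * int)) : {subset s <= S ++ D} ->
      {in s &, forall x y, (lincomb x == lincomb y) = (id x == id y)}.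
    move=> sub x y xs ys; apply/eqP/eqP => [|-> //].
    by apply: inj; rewrite mem_undup sub.
  by rewrite !(size_undup_map_eqker (inj_id _ _)) ?map_id // => x xs;
    rewrite mem_cat xs ?orbT.
have sign := lincomb_kernel_sign _ delta_neq0 ker.
have delta1_neq0 : delta.1 != 0 by apply: contraTneq sign => ->; rewrite mul0r ltxx.
move: (degenerate delta delta_in); rewrite leNgt sign /=.
by rewrite !(size_undup_map_eqker (fun p q _ _ => lincomb_eq_cross delta p q ker delta1_neq0)).
Qed.

Lemma gapset_lincomb (g1 g2 g3 g4 g5 : int * int) :
  gapset 0 (lincomb g1) (lincomb g2) (lincomb g3) (lincomb g4) (lincomb g5) =
  map lincomb (gap_points g1 g2 g3 g4 g5).
Proof. by rewrite /gapset /= !lincombD add0r /lincomb /= !mul0r addr0. Qed.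

End LatticeImage.

Lemma gapset_not_sum_dominant (R : realType) (u v c1 c2 c3 c4 c5 : R)
    (g1 g2 g3 g4 g5 : int * int) :
  0 < u -> 0 < v -> projections_not_sum_dominant (gap_points g1 g2 g3 g4 g5) ->
  c1 = lincomb u v g1 -> c2 = lincomb u v g2 -> c3 = lincomb u v g3 ->
  c4 = lincomb u v g4 -> c5 = lincomb u v g5 ->
  not_sum_dominant (gapset 0 c1 c2 c3 c4 c5).
Proof.
move=> u_gt0 v_gt0 P_ok -> -> -> -> ->.
by rewrite gapset_lincomb; apply: not_sum_dominant_lincomb.
Qed.

Tactic Notation "lattice_gaps" constr(u) constr(v)
    uconstr(g1) uconstr(g2) uconstr(g3) uconstr(g4) uconstr(g5) :=
  refine (@gapset_not_sum_dominant _ u v _ _ _ _ _ g1 g2 g3 g4 g5 _ _ _ _ _ _ _ _);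
  [by [] | by [] | by vm_compute | by rewrite /lincomb /=; ring ..].

Theorem lemma7 (R : realType) (d a b : R) (hd : 0 < d) (ha : 0 < a) (hb : 0 < b) :
  (a + b = d -> not_sum_dominant (gapset 0 d d (2 * d) a b)) /\
  not_sum_dominant (gapset 0 d d (2 * d) d a) /\
  not_sum_dominant (gapset 0 d d (2 * d) a d) /\
  not_sum_dominant (gapset 0 (2 * d) d d a (2 * d)) /\
  not_sum_dominant (gapset 0 a b b a a) /\
  not_sum_dominant (gapset 0 (a + b) a a b (a + b)) /\
  not_sum_dominant (gapset 0 (a + b) a a b a) /\
  not_sum_dominant (gapset 0 a (2 * a) a a b) /\
  not_sum_dominant (gapset 0 (a + b) a (a + b) a b) /\
  not_sum_dominant (gapset 0 (a + b) (2 * a + b) (a + b) a b) /\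
  not_sum_dominant (gapset 0 a b a (a + b) a) /\
  not_sum_dominant (gapset 0 a b (a + b) a a) /\
  not_sum_dominant (gapset 0 (2 * a + b) a a b a) /\
  not_sum_dominant (gapset 0 (a + b) a a b (2 * a)) /\
  not_sum_dominant (gapset 0 a (a + b) a b a).
Proof.
split=> [<-|]; first by lattice_gaps a b (1, 1) (1, 1) (2, 2) (1, 0) (0, 1).
split; first by lattice_gaps d a (1, 0) (1, 0) (2, 0) (1, 0) (0, 1).
split; first by lattice_gaps d a (1, 0) (1, 0) (2, 0) (0, 1) (1, 0).
split; first by lattice_gaps d a (2, 0) (1, 0) (1, 0) (0, 1) (2, 0).
split; first by lattice_gaps a b (1, 0) (0, 1) (0, 1) (1, 0) (1, 0).
split; first by lattice_gaps a b (1, 1) (1, 0) (1, 0) (0, 1) (1, 1).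
split; first by lattice_gaps a b (1, 1) (1, 0) (1, 0) (0, 1) (1, 0).
split; first by lattice_gaps a b (1, 0) (2, 0) (1, 0) (1, 0) (0, 1).
split; first by lattice_gaps a b (1, 1) (1, 0) (1, 1) (1, 0) (0, 1).
split; first by lattice_gaps a b (1, 1) (2, 1) (1, 1) (1, 0) (0, 1).
split; first by lattice_gaps a b (1, 0) (0, 1) (1, 0) (1, 1) (1, 0).
split; first by lattice_gaps a b (1, 0) (0, 1) (1, 1) (1, 0) (1, 0).
split; first by lattice_gaps a b (2, 1) (1, 0) (1, 0) (0, 1) (1, 0).
split; first by lattice_gaps a b (1, 1) (1, 0) (1, 0) (0, 1) (2, 0).
by lattice_gaps a b (1, 0) (1, 1) (1, 0) (0, 1) (1, 0).
Qed.
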